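(* Let $\mathcal W$ be a monotonic game on $[n]$, $i\neq j$ players, and $\hat{\mathcal W}$ the game obtained by imposing a symmetric weak quarrel between $i$ and $j$. Then the Penrose–Banzhaf measure satisfies $\hat\psi^{PB}_i\le\psi^{PB}_i$ and $\hat\psi^{PB}_j\le\psi^{PB}_j$, where $\psi^{PB}$ and $\hat\psi^{PB}$ denote the measure computed in $\mathcal W$ and $\hat{\mathcal W}$ respectively.
   Context: Players are $[n]=\{1,\dots,n\}$. A binary voting game on $[n]$ is identified with its collection $\mathcal W\subseteq 2^{[n]}$ of winning sets ($S\in\mathcal W$ means the division in which exactly the members of $S$ vote YES has outcome YES). It is monotonic if $T\subseteq S$ and $T\in\mathcal W$ imply $S\in\mathcal W$. Player $i$ is YES-decisive for $S$ in a game $\mathcal W$ if $i\in S$, $S\in\mathcal W$ and $S\setminus\{i\}\notin\mathcal W$. Symmetric weak quarrel between $i$ and $j$: for every $S\subseteq[n]\setminus\{i,j\}$, $S\cup\{i,j\}\in\hat{\mathcal W}\iff (S\cup\{i\}\in\mathcal W\text{ or }S\cup\{j\}\in\mathcal W)$; $S\in\hat{\mathcal W}\iff (S\cup\{i\}\in\mathcal W\text{ and }S\cup\{j\}\in\mathcal W)$; $S\cup\{i\}\in\hat{\mathcal W}\iff S\cup\{i\}\in\mathcal W$; $S\cup\{j\}\in\hat{\mathcal W}\iff S\cup\{j\}\in\mathcal W$. Penrose–Banzhaf measure: $\psi^{PB}_i=\frac{1}{2^{n-1}}\#\{S\subseteq[n]: i\in S,\ i\text{ is YES-decisive for }S\}$.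 *)

From mathcomp Require Import all_boot all_order all_algebra.
Set Implicit Arguments. Unset Strict Implicit. Unset Printing Implicit Defensive.
Import GRing.Theory Num.Theory.

(* A binary voting game on players 'I_n is its family of winning sets. *)
Definition game (n : nat) := {set {set 'I_n}}.

Definition monotonic n (W : game n) : Prop :=
  forall S T : {set 'I_n}, T \subset S -> T \in W -> S \in W.

Definition yes_decisive n (W : game n) (i : 'I_n) (S : {set 'I_n}) : bool :=
  [&& i \in S, S \in W & (S :\ i) \notin W].

Definition sym_weak_quarrel n (W Wh : game n) (i j : 'I_n) : Prop :=
  forall S : {set 'I_n}, i \notin S -> j \notin S ->
    [/\ ((S :|: [set i; j]) \in Wh) = ((S :|: [set i]) \in W) || ((S :|: [set j]) \in W),
        (S \in Wh) = ((S :|: [set i]) \in W) && ((S :|: [set j]) \in W),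
        ((S :|: [set i]) \in Wh) = ((S :|: [set i]) \in W) &
        ((S :|: [set j]) \in Wh) = ((S :|: [set j]) \in W)].

Definition PB n (W : game n) (i : 'I_n) : rat :=
  (#|[set S : {set 'I_n} | (i \in S) && yes_decisive W i S]|)%:R / (2 ^ n.-1)%:R.

(* Every swing of i in the quarrelled game is already a swing of i in W.
   Split a coalition S containing i as T + i or T + i + j with i, j outside T.
   If S = T + i + j is winning in Wh but T + j is not, then T + j is losing in
   W, so T + i must be winning in W, and so is S by monotonicity.  If S = T + i
   is winning in Wh but T is not, then T + i is winning in W while T + j is
   losing in W, hence so is T.  The numerators of the Penrose-Banzhaf measures
   therefore compare by inclusion, and the quarrel is symmetric in i and j. *)

From mathcomp Require Import all_boot all_order all_algebra.
Set Implicit Arguments. Unset Strict Implicit.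
Import GRing.Theory Num.Theory.
Local Open Scope ring_scope.

Lemma setU1_setD1 (T : finType) (A : {set T}) (i : T) :
  i \notin A -> (A :|: [set i]) :\ i = A.
Proof. by move=> iA; rewrite setUC setU1K. Qed.

Lemma setU2_setD1 (T : finType) (A : {set T}) (i j : T) :
  i \notin A -> i != j -> (A :|: [set i; j]) :\ i = A :|: [set j].
Proof.
move=> iA nij; apply/setP=> x; rewrite !inE.
by have [->|] := eqVneq x i; rewrite ?(negPf iA) ?(negPf nij) ?andbF.
Qed.

Lemma setD2_split (T : finType) (S : {set T}) (i j : T) : i \in S ->
  S = (S :\: [set i; j]) :|: (if j \in S then [set i; j] else [set i]).
Proof.
move=> iS; apply/setP=> x.
have [->|xi] := eqVneq x i; first by case: ifP; rewrite !inE eqxx ?orbT.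
by case: ifP => jS; rewrite !inE (negPf xi); have [->|] := eqVneq x j; rewrite ?jS ?orbF.
Qed.

Lemma sym_weak_quarrelC n (W Wh : game n) (i j : 'I_n) :
  sym_weak_quarrel W Wh i j -> sym_weak_quarrel W Wh j i.
Proof.
move=> Q S jS iS; have [Qij Qnone Qi Qj] := Q S iS jS.
have -> : [set j; i] = [set i; j] by rewrite setUC.
by split; rewrite // 1?orbC 1?andbC.
Qed.

Section QuarrelSwing.

Variables (n : nat) (W Wh : game n) (i j : 'I_n).
Hypotheses (monW : monotonic W) (nij : i != j) (Q : sym_weak_quarrel W Wh i j).

Lemma quarrel_swing_pair (T : {set 'I_n}) : i \notin T -> j \notin T ->
  yes_decisive Wh i (T :|: [set i; j]) -> yes_decisive W i (T :|: [set i; j]).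
Proof.
move=> iT jT; have [Qij _ _ Qj] := Q iT jT.
rewrite /yes_decisive !setU2_setD1 // Qij Qj => /and3P[-> + Wj].
rewrite (negPf Wj) orbF andbT => Wi.
by apply: monW Wi; rewrite setUS // sub1set !inE eqxx.
Qed.

Lemma quarrel_swing_single (T : {set 'I_n}) : i \notin T -> j \notin T ->
  yes_decisive Wh i (T :|: [set i]) -> yes_decisive W i (T :|: [set i]).
Proof.
move=> iT jT; have [_ Qnone Qi _] := Q iT jT.
rewrite /yes_decisive !setU1_setD1 // Qnone Qi => /and3P[-> Wi].
rewrite Wi /= => Wj; apply: contra Wj => WT.
by apply: monW WT; apply: subsetUl.
Qed.

Lemma quarrel_swing (S : {set 'I_n}) :
  yes_decisive Wh i S -> yes_decisive W i S.
Proof.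
move=> dS; have /and3P[iS _ _] := dS.
have iT : i \notin S :\: [set i; j] by rewrite !inE eqxx.
have jT : j \notin S :\: [set i; j] by rewrite !inE eqxx orbT.
move: dS; rewrite (setD2_split j iS); case: ifP => _.
- exact: quarrel_swing_pair.
- exact: quarrel_swing_single.
Qed.

Lemma PB_quarrel_le : PB Wh i <= PB W i.
Proof.
rewrite /PB ler_pM2r ?invr_gt0 ?ltr0n ?expn_gt0 // ler_nat.
apply/subset_leq_card/subsetP => S; rewrite !inE => /andP[iS /quarrel_swing].
by rewrite iS.
Qed.

End QuarrelSwing.

Theorem theorem15 (n : nat) (W Wh : game n) (i j : 'I_n) :
  monotonic W -> i != j -> sym_weak_quarrel W Wh i j ->
  PB Wh i <= PB W i /\ PB Wh j <= PB W j.
Proof.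
move=> monW nij Q; split; first exact: PB_quarrel_le monW nij Q.
by apply: PB_quarrel_le monW _ (sym_weak_quarrelC Q); rewrite eq_sym.
Qed.
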